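(* Let $q>0$, $q\ne1$, $\nu\ne0$ real. Let $\phi:(\mathbb{R}\setminus\{0\})\times\mathbb{R}\to\mathbb{R}$ be differentiable in $t$, nowhere zero, and satisfy the $q$-heat equation $\partial_t\phi(x,t)=\nu D_x^2\phi(x,t)$. Define $u(x,t)=-2\nu\,\frac{D_x\phi(x,t)}{\phi(x,t)}$. Then for all $x\ne0$ and $t$, $$\partial_tu(x,t)-\nu D_x^2u(x,t)=\tfrac12\,u(x,t)\big[(1-M_q^x)D_xu\big](x,t)-\tfrac12 D_x\big(u(qx,t)u(x,t)\big)+\frac{1}{4\nu}\big[u(q^2x,t)-u(x,t)\big]u(qx,t)u(x,t).$$
   Context: $D_x$ is the $q$-derivative in $x$ at fixed $t$: $D_xf(x,t)=\frac{f(qx,t)-f(x,t)}{(q-1)x}$, $D_x^2=D_x\circ D_x$; $\partial_t$ is the ordinary time derivative. $M_q^x$ is the dilation operator $(M_q^xf)(x,t)=f(qx,t)$, so $[(1-M_q^x)D_xu](x,t)=(D_xu)(x,t)-(D_xu)(qx,t)$. *)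

From Stdlib Require Import Reals.
From Coquelicot Require Import Coquelicot.
Open Scope R_scope.

Definition qD (q : R) (f : R -> R) (x : R) : R :=
  (f (q * x) - f x) / ((q - 1) * x).

Definition qDx (q : R) (F : R -> R -> R) (x t : R) : R :=
  qD q (fun y => F y t) x.

Definition qDx2 (q : R) (F : R -> R -> R) (x t : R) : R :=
  qDx q (fun y s => qDx q F y s) x t.

Definition qM (q : R) (F : R -> R -> R) (x t : R) : R := F (q * x) t.

Definition coleHopf (q nu : R) (phi : R -> R -> R) (x t : R) : R :=
  - 2 * nu * qDx q phi x t / phi x t.

(** Writing [phi_k] for [phi (q^k x) t], every term of the identity is a rational
    function of [phi_0, ..., phi_3] once the time derivatives are removed.  Time
    differentiation commutes with [D_x], so the quotient rule expresses [d_t u]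
    through [d_t phi] at [x] and [q x], and the q-heat equation replaces these by
    second q-derivatives of [phi].  What remains is a field identity. *)

From Stdlib Require Import Reals Lra.
From Coquelicot Require Import Coquelicot.
Open Scope R_scope.

Lemma is_derive_qDx (q : R) (F : R -> R -> R) (dF : R -> R) (x t : R) :
  is_derive (fun s => F x s) t (dF x) ->
  is_derive (fun s => F (q * x) s) t (dF (q * x)) ->
  is_derive (fun s => qDx q F x s) t (qD q dF x).
Proof.
  intros Hx Hqx. unfold qDx, qD.
  apply (is_derive_ext (fun s => / ((q - 1) * x) * (F (q * x) s - F x s))).
  - intros s. unfold Rdiv. apply Rmult_comm.
  - unfold Rdiv. rewrite (Rmult_comm (dF (q * x) - dF x)).
    exact (is_derive_scal _ _ _ _ (is_derive_minus _ _ _ _ _ Hqx Hx)).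
Qed.

Lemma is_derive_coleHopf (q nu : R) (phi : R -> R -> R) (dphi : R -> R) (x t : R) :
  phi x t <> 0 ->
  is_derive (fun s => phi x s) t (dphi x) ->
  is_derive (fun s => phi (q * x) s) t (dphi (q * x)) ->
  is_derive (fun s => coleHopf q nu phi x s) t
    (- 2 * nu * ((qD q dphi x * phi x t - qDx q phi x t * dphi x) / (phi x t ^ 2))).
Proof.
  intros Hnz Hx Hqx. unfold coleHopf.
  apply (is_derive_ext (fun s => - 2 * nu * (qDx q phi x s / phi x s))).
  - intros s. unfold Rdiv. symmetry. apply Rmult_assoc.
  - apply is_derive_scal, is_derive_div; auto.
    now apply is_derive_qDx.
Qed.

Theorem mainTheorem12 (q nu : R) (phi : R -> R -> R)
  (hq0 : 0 < q) (hq1 : q <> 1) (hnu : nu <> 0)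
  (hdiff : forall x t, x <> 0 -> ex_derive (fun s => phi x s) t)
  (hnz : forall x t, x <> 0 -> phi x t <> 0)
  (hheat : forall x t, x <> 0 ->
     Derive (fun s => phi x s) t = nu * qDx2 q phi x t) :
  let u := coleHopf q nu phi in
  forall x t, x <> 0 ->
    Derive (fun s => u x s) t - nu * qDx2 q u x t
    = / 2 * u x t * (qDx q u x t - qM q (qDx q u) x t)
      - / 2 * qDx q (fun y s => u (q * y) s * u y s) x t
      + / (4 * nu) * (u (q * (q * x)) t - u x t) * u (q * x) t * u x t.
Proof.
  intros u x t hx.
  assert (hq : q <> 0) by lra.
  assert (hq1' : q - 1 <> 0) by lra.
  assert (hx1 : q * x <> 0) by now apply Rmult_integral_contrapositive_currified.
  assert (hx2 : q * (q * x) <> 0) by now apply Rmult_integral_contrapositive_currified.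
  assert (hx3 : q * (q * (q * x)) <> 0) by now apply Rmult_integral_contrapositive_currified.
  assert (heat_derive : forall y, y <> 0 ->
            is_derive (fun s => phi y s) t (nu * qDx2 q phi y t)).
  { intros y hy. rewrite <- hheat by exact hy. now apply Derive_correct, hdiff. }
  erewrite is_derive_unique
    by exact (is_derive_coleHopf q nu phi (fun y => nu * qDx2 q phi y t) x t
                (hnz x t hx) (heat_derive x hx) (heat_derive _ hx1)).
  pose proof (hnz x t hx). pose proof (hnz _ t hx1).
  pose proof (hnz _ t hx2). pose proof (hnz _ t hx3).
  unfold u, coleHopf, qM, qDx2, qDx, qD.
  field. repeat split; auto using Rmult_integral_contrapositive_currified.
Qed.
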